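(* Let $\alpha$ be an algebraic number, $K=\mathbb{Q}(\alpha)$, and let $f\in\mathbb{Q}[t]$ be the (monic) minimal polynomial of $\alpha$ over $\mathbb{Q}$. Let $X=\{x_1,\ldots,x_n\}$ be variables, $S=K[X]$ and $T=\mathbb{Q}[X,t]$. Fix a global monomial ordering $\succ_1$ on the monomials in $X$, and let $\succ_K=(\succ_1,\succ)$ be the product ordering on the monomials in $X,t$, where $\succ$ is the global (degree) ordering on monomials in $t$; i.e. $X^a t^b\succ_K X^{a'}t^{b'}$ iff $X^a\succ_1 X^{a'}$, or $a=a'$ and $b>b'$. Let $g_1(X,t),\ldots,g_s(X,t)\in T$, let $I\subseteq S$ be the ideal generated by $g_1(X,\alpha),\ldots,g_s(X,\alpha)$, and let $\widetilde I\subseteq T$ be the ideal generated by $g_1(X,t),\ldots,g_s(X,t), f$. Let $\widetilde G$ be the reduced Gröbner basis of $\widetilde I$ with respect to $\succ_K$. Then the set $\{\,g(X,\alpha) : g\in \widetilde G\setminus\{f\}\,\}$, obtained by substituting $t=\alpha$ into the elements of $\widetilde G$ other than $f$, is the reduced Gröbner basis of $I$ with respect to $\succ_1$.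
   Context: A reduced Gröbner basis is a Gröbner basis $G$ whose elements have leading coefficient $1$, such that for each $g\in G$ no term of $g$ is divisible by the leading monomial of any element of $G\setminus\{g\}$ (the leading monomial of $g$ not divisible by that of any other element). Gröbner bases over $K$ in $S=K[X]$ are with respect to $\succ_1$ and use coefficients in the field $K$. *)

From HB Require Import structures.
From mathcomp Require Import all_boot all_order all_algebra all_field.
From mathcomp Require Import mpoly.
Set Implicit Arguments. Unset Strict Implicit. Unset Printing Implicit Defensive.
Import GRing.Theory Num.Theory.
Local Open Scope ring_scope.

(* [lt m1 m2] reads  m1 "is smaller than" m2  (i.e. m2 ≻ m1). *)
Definition monomial_order (n : nat) (lt : rel 'X_{1..n}) : Prop :=
  [/\ (forall m, ~~ lt m m),
      (forall m1 m2 m3, lt m1 m2 -> lt m2 m3 -> lt m1 m3),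
      (forall m1 m2, m1 != m2 -> lt m1 m2 || lt m2 m1),
      (forall m1 m2 m, lt m1 m2 -> lt (mnm_add m1 m) (mnm_add m2 m)) &
      (forall m, m != mnm0 -> lt mnm0 m)].

(* the X-part of a monomial in X = x_1..x_n and t (t is the last variable) *)
Definition mX (n : nat) (m : 'X_{1..n.+1}) : 'X_{1..n} :=
  [multinom m (widen_ord (leqnSn n) i) | i < n].
Definition mt (n : nat) (m : 'X_{1..n.+1}) : nat := m ord_max.

Definition prod_order (n : nat) (lt1 : rel 'X_{1..n}) : rel 'X_{1..n.+1} :=
  fun m1 m2 => lt1 (mX m1) (mX m2) || ((mX m1 == mX m2) && (mt m1 < mt m2)%N).

Section Groebner.
Context (R : fieldType) (n : nat) (lt : rel 'X_{1..n}).

Definition is_LM (p : {mpoly R[n]}) (m : 'X_{1..n}) : Prop :=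
  m \in msupp p /\ (forall m', m' \in msupp p -> m' != m -> lt m' m).

Definition coefs_in (C : R -> Prop) (p : {mpoly R[n]}) : Prop :=
  forall m, m \in msupp p -> C p@_m.

Definition in_ideal (C : R -> Prop) (gs : seq {mpoly R[n]}) (p : {mpoly R[n]}) : Prop :=
  exists hs : seq {mpoly R[n]},
    [/\ size hs = size gs, (forall h, h \in hs -> coefs_in C h) &
        p = \sum_(i < size gs) hs`_i * gs`_i].

Definition is_groebner (C : R -> Prop) (I : {mpoly R[n]} -> Prop)
    (G : seq {mpoly R[n]}) : Prop :=
  (forall g, g \in G -> [/\ g != 0, coefs_in C g & I g]) /\
  (forall p, I p -> p != 0 ->
     exists g mg mp, [/\ g \in G, is_LM g mg, is_LM p mp & lem mg mp]).

Definition is_reduced_groebner (C : R -> Prop) (I : {mpoly R[n]} -> Prop)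
    (G : seq {mpoly R[n]}) : Prop :=
  is_groebner C I G /\
  (forall g, g \in G ->
     (exists mg, is_LM g mg /\ g@_mg = 1) /\
     (forall g' mg', g' \in G -> g' != g -> is_LM g' mg' ->
        forall m, m \in msupp g -> ~~ lem mg' m)).
End Groebner.

Definition is_subfield (P : algC -> Prop) : Prop :=
  [/\ P 1, (forall x y, P x -> P y -> P (x - y)),
      (forall x y, P x -> P y -> P (x * y)) & (forall x, P x -> P x^-1)].

Definition in_Qadj (alpha : algC) (x : algC) : Prop :=
  forall P, is_subfield P -> P alpha -> P x.

Definition subst_t (n : nat) (alpha : algC) (g : {mpoly rat[n.+1]}) : {mpoly algC[n]} :=
  comp_mpoly [tuple (match unlift ord_max i with
                     | Some j => 'X_j | None => alpha%:MP end) | i < n.+1]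
             (map_mpoly (fun c : rat => ratr c) g).

Definition poly_in_t (n : nat) (f : {poly rat}) : {mpoly rat[n.+1]} :=
  (map_poly (fun c : rat => c%:MP) f).['X_ord_max].

(* Read an element of Q[X,t] as a polynomial in X with coefficients in Q[t].
   An element h <> f of the reduced basis has a leading monomial X^a t^b with
   b = 0: if f divides the Q[t]-coefficient c of X^a in h, minimality of the
   leading monomials of a reduced basis forces h = f; otherwise c is invertible
   modulo f, say u c = 1 + v f, and u h - X^a v f lies in the ideal with leading
   monomial X^a, so again by minimality b = 0.  Hence substituting t := alpha
   keeps leading monomials and leading coefficients, and interreducedness.
   Conversely, each p in I lifts to the ideal of Q[X,t]; after division by f in
   t every coefficient has degree < deg f, so (1, alpha, ..., alpha^(deg f - 1)
   being free over Q) the leading monomial of p is the X-part of that of the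
   lift, which is divisible by the leading monomial of an element other than f. *)

From Pilot Require Import Defs.
From HB Require Import structures.
From mathcomp Require Import all_boot all_order all_algebra all_field.
From mathcomp Require Import mpoly.
From mathcomp Require Import zify ring.
Import GRing.Theory Num.Theory.
Local Open Scope ring_scope.
Set Implicit Arguments.
Unset Strict Implicit.
Unset Printing Implicit Defensive.

(* [mpoly] exports an unrelated [mX]. *)
Local Notation mX := Defs.mX.

Section Subfields.
Variable P : algC -> Prop.
Hypothesis P_subfield : is_subfield P.

Lemma subfield0 : P 0.
Proof. by case: P_subfield => P1 PB _ _; rewrite -(subrr 1); apply: PB. Qed.

Lemma subfieldN x : P x -> P (- x).
Proof.
by case: P_subfield => _ PB _ _ Px; rewrite -sub0r; apply: PB => //; apply: subfield0.
Qed.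

Lemma subfieldD x y : P x -> P y -> P (x + y).
Proof.
by case: P_subfield => _ PB _ _ Px Py; rewrite -[y]opprK; apply: PB => //; apply: subfieldN.
Qed.

Lemma subfield_int (z : int) : P z%:~R.
Proof.
have Pnat k : P k%:R.
  elim: k => [|k IHk]; first exact: subfield0.
  by rewrite mulrS; apply: subfieldD => //; case: P_subfield.
by case: z => k; rewrite ?NegzE ?mulrNz; [apply: Pnat | apply/subfieldN/Pnat].
Qed.

Lemma subfield_rat c : P (ratr c).
Proof. by case: P_subfield => _ _ PM PV; apply: PM; [|apply: PV]; apply: subfield_int. Qed.

End Subfields.

Section MinimalPolynomial.
Variables (alpha : algC) (f : {poly rat}).
Hypothesis f_monic : f \is monic.
Hypothesis f_root : root (map_poly ratr f) alpha.
Hypothesis f_min : forall q : {poly rat}, root (map_poly ratr q) alpha -> f %| q.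

Definition ev_alpha (q : {poly rat}) : algC := (map_poly ratr q).[alpha].
HB.instance Definition _ :=
  GRing.RMorphism.copy ev_alpha (horner_eval alpha \o map_poly ratr).

Lemma ev_alphaC c : ev_alpha c%:P = ratr c.
Proof. by rewrite /ev_alpha map_polyC hornerC. Qed.

Lemma ev_alphaX : ev_alpha 'X = alpha.
Proof. by rewrite /ev_alpha map_polyX hornerX. Qed.

Lemma f_neq0 : f != 0.
Proof. exact: monic_neq0. Qed.

Lemma ev_alpha_eq0 q : (ev_alpha q == 0) = (f %| q).
Proof.
apply/idP/idP => [evq|/dvdpP [k ->]]; first exact: f_min.
by rewrite rmorphM /= [ev_alpha f](eqP f_root) mulr0.
Qed.

Lemma ev_alpha_eq0_small q : ev_alpha q = 0 -> (size q < size f)%N -> q = 0.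
Proof.
move=> /eqP; rewrite ev_alpha_eq0 => fq ltqf; apply: contraTeq ltqf => q_neq0.
by rewrite -leqNgt dvdp_leq.
Qed.

(* In [f = k * gcdp f q] the gcd does not vanish at [alpha], so [f %| k]. *)
Lemma coprimep_ev_alpha q : ev_alpha q != 0 -> coprimep f q.
Proof.
move=> evq; rewrite coprimep_def.
have /dvdpP [k fE] := dvdp_gcdl f q.
have evg : ev_alpha (gcdp f q) != 0.
  apply: contraNneq evq => /eqP; rewrite !ev_alpha_eq0 => /dvdp_trans; apply.
  exact: dvdp_gcdr.
have fk : f %| k.
  rewrite -ev_alpha_eq0; apply/eqP/(mulIf evg).
  by rewrite mul0r -rmorphM /= -fE; apply/eqP.
have k0 : k != 0 by apply: contraNneq f_neq0 => k0; rewrite fE k0 mul0r.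
have g0 : gcdp f q != 0 by apply: contraNneq f_neq0 => g0; rewrite fE g0 mulr0.
have := dvdp_leq k0 fk; rewrite [in X in (X <= _)%N]fE (size_mul k0 g0).
move: g0 k0; rewrite -!size_poly_gt0.
by move: (size k) (size (gcdp f q)) => sk sg; lia.
Qed.

Lemma ev_alpha_inv q : ev_alpha q != 0 -> exists u, f %| u * q - 1.
Proof.
move=> /coprimep_ev_alpha /Bezout_eq1_coprimepP [[v u] /= e].
exists u; have -> : u * q - 1 = - v * f by rewrite -e; ring.
exact: dvdp_mull.
Qed.

Lemma in_Qadj_ev_alpha q : in_Qadj alpha (ev_alpha q).
Proof.
move=> P P_subfield Palpha; elim/poly_ind: q => [|q c IHq].
  by rewrite rmorph0; apply: subfield0.
rewrite rmorphD rmorphM /= ev_alphaX ev_alphaC.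
apply: subfieldD => //; last exact: subfield_rat.
by case: P_subfield => _ _ PM _; apply: PM.
Qed.

Lemma in_QadjP x : in_Qadj alpha x <-> exists q, x = ev_alpha q.
Proof.
split=> [Qx|[q ->]]; last exact: in_Qadj_ev_alpha.
apply: (Qx (fun y => exists q, y = ev_alpha q)); last by exists 'X; rewrite ev_alphaX.
split.
- by exists 1; rewrite rmorph1.
- by move=> _ _ [p ->] [q ->]; exists (p - q); rewrite rmorphB.
- by move=> _ _ [p ->] [q ->]; exists (p * q); rewrite rmorphM.
move=> _ [q ->]; have [->|evq] := eqVneq (ev_alpha q) 0.
  by exists 0; rewrite invr0 rmorph0.
have [u /dvdpP [v uqE]] := ev_alpha_inv evq; exists u.
apply: (mulIf evq); rewrite mulVf // -rmorphM /= -[u * q](subrK 1) uqE.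
by rewrite rmorphD rmorphM /= [ev_alpha f](eqP f_root) mulr0 add0r rmorph1.
Qed.

End MinimalPolynomial.

Section MonomialsXt.
Variable n : nat.

Definition mk (a : 'X_{1..n}) (e : nat) : 'X_{1..n.+1} :=
  [multinom if unlift ord_max i is Some j then a j else e | i < n.+1].

Lemma widen_lift (j : 'I_n) : widen_ord (leqnSn n) j = lift ord_max j.
Proof. by apply: val_inj; rewrite /= /bump leqNgt ltn_ord. Qed.

Lemma mXE (m : 'X_{1..n.+1}) (j : 'I_n) : mX m j = m (lift ord_max j).
Proof. by rewrite /mX mnmE widen_lift. Qed.

Lemma mX_mk a e : mX (mk a e) = a.
Proof. by apply/mnmP => j; rewrite mXE /mk mnmE liftK. Qed.

Lemma mt_mk a e : mt (mk a e) = e.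
Proof. by rewrite /mt /mk mnmE unlift_none. Qed.

Lemma mkK (m : 'X_{1..n.+1}) : mk (mX m) (mt m) = m.
Proof.
by apply/mnmP => i; rewrite /mk mnmE; case: (unliftP ord_max i) => [j ->|->]; rewrite ?mXE.
Qed.

Lemma eq_mk (m : 'X_{1..n.+1}) a e : (m == mk a e) = (mX m == a) && (mt m == e).
Proof.
apply/eqP/andP => [->|[/eqP <- /eqP <-]]; last by rewrite mkK.
by rewrite mX_mk mt_mk.
Qed.

Lemma mXD (m1 m2 : 'X_{1..n.+1}) : mX (m1 + m2)%MM = (mX m1 + mX m2)%MM.
Proof. by apply/mnmP => j; rewrite mnmDE !mXE mnmDE. Qed.

Lemma mtD (m1 m2 : 'X_{1..n.+1}) : mt (m1 + m2)%MM = (mt m1 + mt m2)%N.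
Proof. by rewrite /mt mnmDE. Qed.

Lemma mkD a b a' b' : (mk a b + mk a' b')%MM = mk (a + a')%MM (b + b').
Proof. by rewrite -[LHS]mkK mXD mtD !mX_mk !mt_mk. Qed.

Lemma mk0 : mk 0%MM 0 = 0%MM.
Proof. by apply/mnmP => i; rewrite /mk !mnmE; case: unlift => // j; rewrite mnmE. Qed.

Lemma lem_mXmt (m1 m2 : 'X_{1..n.+1}) :
  (m1 <= m2)%MM = (mX m1 <= mX m2)%MM && (mt m1 <= mt m2)%N.
Proof.
apply/mnm_lepP/andP => [le12|[/mnm_lepP leX leT] i].
  by split; [apply/mnm_lepP => j; rewrite !mXE | apply: le12].
by case: (unliftP ord_max i) => [j ->|->]; rewrite -?mXE.
Qed.

End MonomialsXt.

Lemma lem0m n (m : 'X_{1..n}) : (0 <= m)%MM.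
Proof. by apply/mnm_lepP => i; rewrite mnm0E. Qed.

Section MonomialOrders.
Variables (n : nat) (lt1 : rel 'X_{1..n}).
Hypothesis lt1_order : monomial_order lt1.

Lemma lt1_irr m : ~~ lt1 m m.
Proof. by case: lt1_order. Qed.

Lemma lt1_trans m1 m2 m3 : lt1 m1 m2 -> lt1 m2 m3 -> lt1 m1 m3.
Proof. by case: lt1_order => _ lt1_tr _ _ _; apply: lt1_tr. Qed.

Lemma lt1_0 m : ~~ lt1 m 0%MM.
Proof.
have [->|m0] := eqVneq m 0%MM; first exact: lt1_irr.
case: lt1_order => _ _ _ _ /(_ m m0) lt0m; apply/negP => /lt1_trans/(_ lt0m).
by rewrite (negbTE (lt1_irr _)).
Qed.

Lemma prod_order_irr m : ~~ prod_order lt1 m m.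
Proof. by rewrite /prod_order (negbTE (lt1_irr _)) ltnn andbF. Qed.

Lemma prod_order_trans m1 m2 m3 :
  prod_order lt1 m1 m2 -> prod_order lt1 m2 m3 -> prod_order lt1 m1 m3.
Proof.
rewrite /prod_order => /orP[lt12|/andP[/eqP e12 lt12]] /orP[lt23|/andP[/eqP e23 lt23]].
- by rewrite (lt1_trans lt12 lt23).
- by rewrite -e23 lt12.
- by rewrite e12 lt23.
- by rewrite e12 e23 eqxx (ltn_trans lt12 lt23) orbT.
Qed.

Lemma prod_order_same_mX m1 m2 : mX m1 = mX m2 -> prod_order lt1 m1 m2 = (mt m1 < mt m2)%N.
Proof. by move=> eX; rewrite /prod_order eX (negbTE (lt1_irr _)) eqxx. Qed.

Lemma prod_order_mk0 m e : prod_order lt1 m (mk 0 e) = (mX m == 0%MM) && (mt m < e)%N.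
Proof. by rewrite /prod_order mX_mk mt_mk (negbTE (lt1_0 _)). Qed.

End MonomialOrders.

Section Substitution.
Variables (alpha : algC) (n : nat).
Local Notation subst := (@subst_t n alpha).
Local Notation ev := (ev_alpha alpha).

HB.instance Definition _ := GRing.RMorphism.copy subst
  (comp_mpoly [tuple match unlift ord_max i with Some j => 'X_j | None => alpha%:MP end
                  | i < n.+1] \o map_mpoly (fun c : rat => ratr c)).

HB.instance Definition _ := GRing.RMorphism.copy (poly_in_t n)
  (horner_eval 'X_ord_max \o map_poly (fun c : rat => c%:MP)).

Lemma subst_scaleX c m : subst (c *: 'X_[m]) = (ratr c * alpha ^+ mt m) *: 'X_[mX m].
Proof.
rewrite /subst_t map_mpolyZ map_mpolyX comp_mpolyZ comp_mpolyX big_ord_recr /=.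
rewrite tnth_mktuple unlift_none mpolyXE_id -scalerA mulrC -rmorphXn /= mul_mpolyC.
by congr (_ *: (_ *: _)); apply: eq_bigr => j _; rewrite tnth_mktuple widen_lift liftK mXE.
Qed.

Definition tcoef (g : {mpoly rat[n.+1]}) (a : 'X_{1..n}) : {poly rat} :=
  \sum_(m <- msupp g | mX m == a) g@_m *: 'X^(mt m).

Lemma coef_tcoef g a e : (tcoef g a)`_e = g@_(mk a e).
Proof.
rewrite /tcoef coef_sum big_mkcond [in RHS](mpolyE g) raddf_sum /=; apply: eq_bigr => m _.
rewrite coefZ coefXn mcoeffZ mcoeffX eq_mk [mX m == a]eq_sym [mt m == e]eq_sym.
by case: (a == mX m); rewrite ?mulr0.
Qed.

Lemma mcoeff_subst g a : (subst g)@_a = ev (tcoef g a).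
Proof.
rewrite {1}(mpolyE g) rmorph_sum raddf_sum rmorph_sum [RHS]big_mkcond /=.
apply: eq_bigr => m _; rewrite subst_scaleX mcoeffZ mcoeffX eq_sym.
case: (a == mX m); rewrite ?mulr0 ?rmorph0 // mulr1.
by rewrite -mul_polyC rmorphM rmorphXn /= ev_alphaC ev_alphaX.
Qed.

Lemma msupp_subst g a : a \in msupp (subst g) -> exists2 m, m \in msupp g & mX m = a.
Proof.
rewrite mcoeff_msupp mcoeff_subst /tcoef.
have [/hasP [m gm /eqP <-]|no_m] := boolP (has (fun m => mX m == a) (msupp g)).
  by exists m.
by rewrite big_hasC // rmorph0 eqxx.
Qed.

Lemma coefs_in_subst g : coefs_in (in_Qadj alpha) (subst g).
Proof. by move=> a _; rewrite mcoeff_subst; apply: in_Qadj_ev_alpha. Qed.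

Lemma poly_in_tXn k : poly_in_t n 'X^k = 'X_[mk 0 k].
Proof.
rewrite rmorphXn /= /poly_in_t map_polyX hornerX mpolyXn; congr 'X_[_].
apply/mnmP => i; rewrite mulmnE mnm1E /mk mnmE; case: (unliftP ord_max i) => [j ->|->].
  by rewrite mnmE (negbTE (neq_lift _ _)).
by rewrite eqxx mul1n.
Qed.

Lemma poly_in_tC c : poly_in_t n c%:P = c%:MP.
Proof. by rewrite /poly_in_t map_polyC hornerC. Qed.

Lemma mpolyX_mk a e : 'X_[mk a e] = 'X_[mk a 0] * poly_in_t n 'X^e.
Proof. by rewrite poly_in_tXn -mpolyXD mkD addm0 add0n. Qed.

Lemma mcoeff_Xmk_poly_in_t a q m :
  ('X_[mk a 0] * poly_in_t n q)@_m = if mX m == a then q`_(mt m) else 0.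
Proof.
rewrite -[q]coefK poly_def rmorph_sum mulr_sumr raddf_sum /=.
under eq_bigr => i _ do rewrite -mul_polyC rmorphM /= mulrCA -mpolyX_mk
  poly_in_tC mul_mpolyC mcoeffZ mcoeffX eq_sym eq_mk.
case: eqP => _ /=; last by rewrite big1 // => i _; rewrite mulr0.
rewrite coef_sum; apply: eq_bigr => i _.
by rewrite coefZ coefXn eq_sym.
Qed.

Lemma mcoeff_poly_in_t q m : (poly_in_t n q)@_m = if mX m == 0%MM then q`_(mt m) else 0.
Proof. by rewrite -mcoeff_Xmk_poly_in_t mk0 mpolyX0 mul1r. Qed.

Lemma tcoef_Xmk_poly_in_t a q b :
  tcoef ('X_[mk a 0] * poly_in_t n q) b = if b == a then q else 0.
Proof.
apply/polyP => e; rewrite coef_tcoef mcoeff_Xmk_poly_in_t mX_mk mt_mk.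
by case: ifP; rewrite ?coef0.
Qed.

Lemma subst_Xmk_poly_in_t a q : subst ('X_[mk a 0] * poly_in_t n q) = ev q *: 'X_[a].
Proof.
apply/mpolyP => b; rewrite mcoeff_subst tcoef_Xmk_poly_in_t mcoeffZ mcoeffX eq_sym.
by case: (a == b); rewrite ?rmorph0 ?mulr0 ?mulr1.
Qed.

End Substitution.

Section IdealMembership.
Variables (R : fieldType) (k : nat) (gs : seq {mpoly R[k]}).
Local Notation I := (in_ideal (fun _ => True) gs).

Lemma in_ideal_lincomb (hs : nat -> {mpoly R[k]}) : I (\sum_(i < size gs) hs i * gs`_i).
Proof.
exists (mkseq hs (size gs)); rewrite size_mkseq; split => //.
by apply: eq_bigr => i _; rewrite nth_mkseq.
Qed.

Lemma in_ideal0 : I 0.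
Proof. by have := in_ideal_lincomb (fun=> 0); rewrite big1 // => i _; rewrite mul0r. Qed.

Lemma in_idealD p q : I p -> I q -> I (p + q).
Proof.
move=> [hp [_ _ ->]] [hq [_ _ ->]]; rewrite -big_split /=.
under eq_bigr do rewrite -mulrDl.
exact: (in_ideal_lincomb (fun i => hp`_i + hq`_i)).
Qed.

Lemma in_idealMl r p : I p -> I (r * p).
Proof.
move=> [hp [_ _ ->]]; rewrite mulr_sumr.
under eq_bigr do rewrite mulrA.
exact: (in_ideal_lincomb (fun i => r * hp`_i)).
Qed.

Lemma in_idealB p q : I p -> I q -> I (p - q).
Proof. by move=> Ip Iq; rewrite -mulN1r; apply/in_idealD/in_idealMl. Qed.

Lemma in_ideal_gen i : (i < size gs)%N -> I gs`_i.
Proof.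
move=> lt_i; have := in_ideal_lincomb (fun j => (j == i)%:R).
rewrite (bigD1 (Ordinal lt_i)) //= eqxx mul1r big1 ?addr0 // => j.
by rewrite -val_eqE /= => /negbTE ->; rewrite mul0r.
Qed.

End IdealMembership.

Lemma is_LM_uniq (R : fieldType) n (lt : rel 'X_{1..n}) (p : {mpoly R[n]}) m1 m2 :
  (forall m, ~~ lt m m) -> (forall m1 m2 m3, lt m1 m2 -> lt m2 m3 -> lt m1 m3) ->
  is_LM lt p m1 -> is_LM lt p m2 -> m1 = m2.
Proof.
move=> lt_irr lt_trans [p_m1 lt_m1] [p_m2 lt_m2]; apply/eqP/negP => /negP ne12.
have := lt_irr m1; rewrite (lt_trans _ _ _ (lt_m2 _ p_m1 ne12) (lt_m1 _ p_m2 _)) //.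
by rewrite eq_sym.
Qed.

Section ReducedGroebner.
Variables (R : fieldType) (n : nat) (lt : rel 'X_{1..n}).
Hypothesis lt_irr : forall m, ~~ lt m m.
Hypothesis lt_trans : forall m1 m2 m3, lt m1 m2 -> lt m2 m3 -> lt m1 m3.
Variables (C : R -> Prop) (I : {mpoly R[n]} -> Prop) (G : seq {mpoly R[n]}).
Hypothesis G_red : is_reduced_groebner lt C I G.

Lemma reduced_groebner_lead_coef g mg : g \in G -> is_LM lt g mg -> g@_mg = 1.
Proof.
move=> Gg g_mg; have [[mg' [g_mg' g1]] _] := G_red.2 g Gg.
by rewrite (is_LM_uniq lt_irr lt_trans g_mg g_mg').
Qed.

Lemma reduced_groebner_LM_dvd g g' mg' m :
  g \in G -> g' \in G -> is_LM lt g' mg' -> m \in msupp g -> (mg' <= m)%MM -> g' = g.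
Proof.
move=> Gg Gg' g'_mg' g_m le_mg'm; apply/eqP/negP => /negP ne.
by have [_ red] := G_red.2 g Gg; move: (red g' mg' Gg' ne g'_mg' m g_m); rewrite le_mg'm.
Qed.

Lemma reduced_groebner_LM_min p mp g mg :
  I p -> p != 0 -> is_LM lt p mp -> g \in G -> is_LM lt g mg -> (mp <= mg)%MM -> mp = mg.
Proof.
move=> Ip p0 p_mp Gg g_mg le_mp_mg.
have [g' [mg' [mp' [Gg' g'_mg' p_mp' le']]]] := G_red.1.2 p Ip p0.
rewrite -(is_LM_uniq lt_irr lt_trans p_mp p_mp') in le'.
have mg_g : mg \in msupp g by case: g_mg.
have eg := reduced_groebner_LM_dvd Gg Gg' g'_mg' mg_g (lepm_trans le' le_mp_mg).
rewrite eg in g'_mg'; rewrite (is_LM_uniq lt_irr lt_trans g_mg g'_mg') in le_mp_mg *.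
by apply/mnmP => i; apply/anti_leq; rewrite (mnm_lepP le_mp_mg) (mnm_lepP le').
Qed.

End ReducedGroebner.

Section SubstitutedBasis.
Variables (alpha : algC) (f : {poly rat}).
Hypothesis f_monic : f \is monic.
Hypothesis f_root : root (map_poly ratr f) alpha.
Hypothesis f_min : forall q : {poly rat}, root (map_poly ratr q) alpha -> f %| q.
Variables (n : nat) (lt1 : rel 'X_{1..n}).
Hypothesis lt1_order : monomial_order lt1.
Variables (gs Gt : seq {mpoly rat[n.+1]}).
Hypothesis Gt_red : is_reduced_groebner (prod_order lt1) (fun _ => True)
  (in_ideal (fun _ => True) (rcons gs (poly_in_t n f))) Gt.

Local Notation lt := (prod_order lt1).
Local Notation ft := (poly_in_t n f).
Local Notation J := (in_ideal (fun _ => True) (rcons gs ft)).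
Local Notation subst := (subst_t alpha).
Local Notation ev := (ev_alpha alpha).
Local Notation d := (size f).-1.

Let lt_irr := prod_order_irr lt1_order.
Let lt_trans := prod_order_trans lt1_order.

Lemma f_lead : f`_d = 1.
Proof. exact/monicP. Qed.

Lemma size_f : size f = d.+1.
Proof. by rewrite prednK // size_poly_gt0 f_neq0. Qed.

Lemma ft_in_J : J ft.
Proof.
have := @in_ideal_gen _ _ (rcons gs ft) (size gs).
by rewrite size_rcons nth_rcons ltnn eqxx; apply.
Qed.

Lemma gs_in_J i : (i < size gs)%N -> J gs`_i.
Proof.
move=> lt_i; have := @in_ideal_gen _ _ (rcons gs ft) i; rewrite size_rcons nth_rcons lt_i.
by apply; rewrite ltnS ltnW.
Qed.

Lemma subst_ft : subst ft = 0.
Proof.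
by rewrite -[ft]mul1r -mpolyX0 -mk0 subst_Xmk_poly_in_t [ev f](eqP f_root) scale0r.
Qed.

Lemma is_LM_ft : is_LM lt ft (mk 0 d).
Proof.
split; first by rewrite mcoeff_msupp mcoeff_poly_in_t mX_mk mt_mk eqxx f_lead oner_neq0.
move=> m; rewrite mcoeff_msupp mcoeff_poly_in_t eq_mk.
have [mX0 /=|] := eqVneq (mX m) 0%MM; last by rewrite eqxx.
rewrite (prod_order_same_mX lt1_order) ?mX_mk // mt_mk ltn_neqAle => f_mt ->.
by rewrite -ltnS -size_f; apply: contraNT f_mt; rewrite -leqNgt => /leq_sizeP ->.
Qed.

Lemma ft_neq0 : ft != 0.
Proof. by case: is_LM_ft => ft_d _; apply: contraTneq ft_d => ->; rewrite msupp0. Qed.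

Lemma tcoef_LM_high (h : {mpoly rat[n.+1]}) mh e :
  is_LM lt h mh -> (mt mh < e)%N -> (tcoef h (mX mh))`_e = 0.
Proof.
move=> [_ lt_mh] lt_e; rewrite coef_tcoef; apply/eqP; rewrite mcoeff_eq0.
have ne : mk (mX mh) e != mh by apply: contraTneq lt_e => <-; rewrite mt_mk ltnn.
apply/negP => /lt_mh/(_ ne); rewrite (prod_order_same_mX lt1_order) ?mX_mk // mt_mk.
by rewrite ltnNge ltnW.
Qed.

Lemma lt_LM_mX (h : {mpoly rat[n.+1]}) mh m :
  is_LM lt h mh -> m \in msupp h -> mX m != mX mh -> lt1 (mX m) (mX mh).
Proof.
move=> [_ lt_mh] h_m neX; have /lt_mh : m != mh by apply: contra neX => /eqP ->.
by move/(_ h_m)/orP => [//|/andP [/eqP eX _]]; rewrite eX eqxx in neX.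
Qed.

Lemma Gt_in_J g : g \in Gt -> J g.
Proof. by move=> Gg; have [_ _] := Gt_red.1.1 g Gg. Qed.

Lemma Gt_eq_ft_of_dvd (h : {mpoly rat[n.+1]}) mh :
  h \in Gt -> is_LM lt h mh -> f %| tcoef h (mX mh) -> h = ft.
Proof.
move=> Gh h_mh f_c.
have h1 := reduced_groebner_lead_coef lt_irr lt_trans Gt_red Gh h_mh.
have c0 : tcoef h (mX mh) != 0.
  by apply: contra_neq (oner_neq0 rat) => c0; rewrite -h1 -[mh]mkK -coef_tcoef c0 coef0.
have d_le : (d <= mt mh)%N.
  rewrite -ltnS -size_f; apply: leq_trans (dvdp_leq c0 f_c) _.
  by apply/leq_sizeP => e; apply: tcoef_LM_high.
have mhE : mh = mk 0 d.
  apply/esym/(reduced_groebner_LM_min lt_irr lt_trans Gt_red ft_in_J ft_neq0 is_LM_ft Gh h_mh).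
  by rewrite lem_mXmt mX_mk mt_mk lem0m.
subst mh; apply/eqP; apply: contraT => h_ft.
have Jp : J (h - ft) := in_idealB (Gt_in_J Gh) ft_in_J.
have p0 : h - ft != 0 by rewrite subr_eq0.
have [_ [_ [mp [_ _ p_mp _]]]] := Gt_red.1.2 _ Jp p0.
have p_supp : mp \in msupp (h - ft) by case: p_mp.
have mp_mh : mp != mk 0 d.
  apply: contraTneq p_supp => ->; rewrite mcoeff_msupp mcoeffB h1.
  by rewrite mcoeff_poly_in_t mX_mk mt_mk eqxx f_lead subrr eqxx.
have lt_mp : lt mp (mk 0 d).
  move/msuppB_le: p_supp; rewrite mem_cat => /orP [h_mp|ft_mp].
    by case: h_mh => _; apply.
  by case: is_LM_ft => _; apply.
have le_mp : (mp <= mk 0 d)%MM.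
  move: lt_mp; rewrite (prod_order_mk0 lt1_order) lem_mXmt mX_mk mt_mk.
  by case/andP => /eqP -> /ltnW ->; rewrite lem0m.
have := reduced_groebner_LM_min lt_irr lt_trans Gt_red Jp p0 p_mp Gh h_mh le_mp.
by move/eqP: mp_mh.
Qed.

(* With [u * c = 1 + v * f], the element [u h - X^a v f] has [X^a]-column
   [u * c - v * f = 1] and all its other monomials below [X^a]. *)
Lemma J_LM_Xa_of_ndvd (h : {mpoly rat[n.+1]}) mh :
  J h -> is_LM lt h mh -> ~~ (f %| tcoef h (mX mh)) ->
  exists Q, [/\ J Q, Q != 0 & is_LM lt Q (mk (mX mh) 0)].
Proof.
move=> Jh h_mh; set a := mX mh; set c := tcoef h a; rewrite -(ev_alpha_eq0 f_root f_min).
move=> /(ev_alpha_inv f_monic f_root f_min) [u /dvdpP [v ucE]].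
pose Xa : {mpoly rat[n.+1]} := 'X_[mk a 0].
pose r := h - Xa * poly_in_t n c.
have mcoeff_r m : r@_m = if mX m == a then 0 else h@_m.
  rewrite mcoeffB mcoeff_Xmk_poly_in_t; case: eqP => [eX|_]; last by rewrite subr0.
  by rewrite coef_tcoef -eX mkK subrr.
have ur_lt m : m \in msupp (poly_in_t n u * r) -> lt1 (mX m) a.
  move/msuppM_le/allpairsP => [[m1 m2] /= [u_m1 r_m2 ->]].
  move: u_m1 r_m2; rewrite !mcoeff_msupp mcoeff_poly_in_t mcoeff_r mXD.
  have [-> _|] := eqVneq (mX m1) 0%MM; last by rewrite eqxx.
  have [|neX h_m2] := eqVneq (mX m2) a; first by rewrite eqxx.
  by rewrite add0m; apply: lt_LM_mX h_mh _ neX; rewrite mcoeff_msupp.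
pose Q := poly_in_t n u * h - Xa * poly_in_t n v * ft.
have QE : Q = Xa + poly_in_t n u * r.
  have uc : poly_in_t n u * poly_in_t n c = poly_in_t n v * ft + 1.
    by rewrite -!rmorphM -ucE rmorphB rmorph1 subrK.
  by rewrite /Q /r mulrBr mulrCA uc; ring.
have Q_a : Q@_(mk a 0) = 1.
  rewrite QE mcoeffD mcoeffX eqxx; apply/eqP; rewrite addrC -subr_eq0 addrK mcoeff_eq0.
  by apply/negP => /ur_lt; rewrite mX_mk (negbTE (lt1_irr lt1_order _)).
exists Q; split.
- by apply: in_idealB; apply: in_idealMl; [|apply: ft_in_J].
- by apply: contra_neq (oner_neq0 rat) => Q0; rewrite -Q_a Q0 mcoeff0.
split=> [|m]; first by rewrite mcoeff_msupp Q_a oner_neq0.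
rewrite QE => /msuppD_le; rewrite mem_cat msuppX inE => /orP [/eqP -> /eqP //|/ur_lt lt_a _].
by rewrite /prod_order mX_mk lt_a.
Qed.

Lemma Gt_LM_t0_of_ndvd (h : {mpoly rat[n.+1]}) mh :
  h \in Gt -> is_LM lt h mh -> ~~ (f %| tcoef h (mX mh)) -> mt mh = 0%N.
Proof.
move=> Gh h_mh ndvd; have [Q [JQ Q0 Q_LM]] := J_LM_Xa_of_ndvd (Gt_in_J Gh) h_mh ndvd.
have le_Q : (mk (mX mh) 0 <= mh)%MM by rewrite lem_mXmt mX_mk mt_mk lepm_refl.
have := reduced_groebner_LM_min lt_irr lt_trans Gt_red JQ Q0 Q_LM Gh h_mh le_Q.
by move/(congr1 (@mt n)); rewrite mt_mk.
Qed.

Lemma Gt_LM_t0 (h : {mpoly rat[n.+1]}) mh :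
  h \in Gt -> h != ft -> is_LM lt h mh -> mt mh = 0%N.
Proof.
move=> Gh h_ft h_mh; apply: (Gt_LM_t0_of_ndvd Gh h_mh).
by apply: contra h_ft => /(Gt_eq_ft_of_dvd Gh h_mh) ->.
Qed.

Lemma is_LM_subst (P : {mpoly rat[n.+1]}) mP :
  is_LM lt P mP -> mX mP \in msupp (subst P) -> is_LM lt1 (subst P) (mX mP).
Proof.
move=> P_mP subst_mP; split=> // a /msupp_subst [m P_m <-] neX.
exact: lt_LM_mX P_mP P_m neX.
Qed.

Lemma mcoeff_subst_LM_t0 (h : {mpoly rat[n.+1]}) mh :
  is_LM lt h mh -> mt mh = 0%N -> (subst h)@_(mX mh) = ratr h@_mh.
Proof.
move=> h_mh mh_t0; rewrite mcoeff_subst -(ev_alphaC alpha); congr ev; apply/polyP => e.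
rewrite coef_tcoef coefC; case: e => [|e] /=; first by rewrite -[X in mk _ X]mh_t0 mkK.
by rewrite -coef_tcoef tcoef_LM_high // mh_t0.
Qed.

Lemma subst_Gt_LM (h : {mpoly rat[n.+1]}) : h \in Gt -> h != ft -> exists mh,
  [/\ is_LM lt h mh, mt mh = 0%N, is_LM lt1 (subst h) (mX mh) & (subst h)@_(mX mh) = 1].
Proof.
move=> Gh h_ft; have [[mh [h_mh h1]] _] := Gt_red.2 h Gh.
have mh_t0 := Gt_LM_t0 Gh h_ft h_mh.
have subst1 : (subst h)@_(mX mh) = 1 by rewrite mcoeff_subst_LM_t0 // h1 rmorph1.
exists mh; split=> //; apply: is_LM_subst => //.
by rewrite mcoeff_msupp subst1 oner_neq0.
Qed.

Lemma subst_in_ideal P : J P -> in_ideal (in_Qadj alpha) (map subst gs) (subst P).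
Proof.
move=> [hs [_ _ ->]]; exists (mkseq (fun i => subst hs`_i) (size gs)); split.
- by rewrite size_mkseq size_map.
- by move=> _ /mapP [i _ ->]; apply: coefs_in_subst.
rewrite rmorph_sum size_rcons big_ord_recr /= nth_rcons ltnn eqxx.
rewrite [subst (_ * ft)]rmorphM /= subst_ft mulr0 addr0 size_map; apply: eq_bigr => i _.
by rewrite nth_mkseq // rmorphM nth_rcons ltn_ord (nth_map 0).
Qed.

Lemma lift_coefs_in (h : {mpoly algC[n]}) : coefs_in (in_Qadj alpha) h -> exists H, subst H = h.
Proof.
move=> h_Qadj; rewrite (mpolyE h) big_seq.
apply: (big_ind (fun q => exists H, subst H = q)).
- by exists 0; rewrite rmorph0.
- by move=> _ _ [H1 <-] [H2 <-]; exists (H1 + H2); rewrite rmorphD.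
move=> a /h_Qadj /(in_QadjP f_monic f_root f_min) [q ->].
by exists ('X_[mk a 0] * poly_in_t n q); rewrite subst_Xmk_poly_in_t.
Qed.

Lemma lift_in_ideal p :
  in_ideal (in_Qadj alpha) (map subst gs) p -> exists2 P, J P & subst P = p.
Proof.
move=> [hs [size_hs hs_Qadj ->]].
apply: (big_ind (fun q => exists2 P, J P & subst P = q)).
- by exists 0; [apply: in_ideal0 | rewrite rmorph0].
- by move=> _ _ [P1 J1 <-] [P2 J2 <-]; exists (P1 + P2); [apply: in_idealD | rewrite rmorphD].
move=> i _; have lt_i : (i < size gs)%N by rewrite -(size_map subst).
have hs_i : hs`_i \in hs by rewrite mem_nth // size_hs.
have [H <-] := lift_coefs_in (hs_Qadj _ hs_i).
by exists (H * gs`_i); [apply/in_idealMl/gs_in_J | rewrite rmorphM (nth_map 0)].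
Qed.

(* Division by the monic [f] in the variable [t], monomial by monomial. *)
Lemma divp_ft (P : {mpoly rat[n.+1]}) :
  exists R P', P = R * ft + P' /\ forall m, m \in msupp P' -> (mt m < d)%N.
Proof.
pose Xm m : {mpoly rat[n.+1]} := 'X_[mk (mX m) 0].
exists (\sum_(m <- msupp P) P@_m *: (Xm m * poly_in_t n ('X^(mt m) %/ f))).
exists (\sum_(m <- msupp P) P@_m *: (Xm m * poly_in_t n ('X^(mt m) %% f))); split.
  rewrite {1}(mpolyE P) mulr_suml -big_split /=; apply: eq_bigr => m _.
  have -> : 'X_[m] = Xm m * poly_in_t n 'X^(mt m) by rewrite -mpolyX_mk mkK.
  rewrite -scalerAl -scalerDr {1}(divp_eq 'X^(mt m) f) rmorphD rmorphM /=.
  by rewrite -mulrA mulrDr.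
move=> m; rewrite mcoeff_msupp; apply: contraR; rewrite -leqNgt => d_le.
rewrite raddf_sum big1 //= => m' _; rewrite mcoeffZ mcoeff_Xmk_poly_in_t.
case: ifP => _; last by rewrite mulr0.
rewrite nth_default ?mulr0 //; apply: leq_trans d_le.
by rewrite -ltnS -size_f ltn_modp f_neq0.
Qed.

Lemma J_mod_ft P : J P -> exists P',
  [/\ J P', subst P' = subst P & forall m, m \in msupp P' -> (mt m < d)%N].
Proof.
move=> JP; have [R [P' [PE P'_t]]] := divp_ft P.
exists P'; split=> //; last by rewrite PE rmorphD rmorphM /= subst_ft mulr0 add0r.
by rewrite -[P'](addKr (R * ft)) -PE addrC; apply/in_idealB/in_idealMl/ft_in_J.
Qed.

Lemma is_LM_subst_reduced (P : {mpoly rat[n.+1]}) mP :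
  (forall m, m \in msupp P -> (mt m < d)%N) -> is_LM lt P mP -> is_LM lt1 (subst P) (mX mP).
Proof.
move=> P_t P_mP; apply: is_LM_subst => //.
have P_supp : mP \in msupp P by case: P_mP.
rewrite mcoeff_msupp mcoeff_subst; apply/eqP => /(ev_alpha_eq0_small f_root f_min).
have size_c : (size (tcoef P (mX mP)) < size f)%N.
  rewrite size_f ltnS; apply/leq_sizeP => e d_le; rewrite coef_tcoef.
  by apply/eqP; rewrite mcoeff_eq0; apply: contraTN d_le => /P_t; rewrite mt_mk -ltnNge.
move=> /(_ size_c) c0; move: P_supp; rewrite mcoeff_msupp -[mP]mkK -coef_tcoef c0.
by rewrite coef0 eqxx.
Qed.

Local Notation G := (map subst [seq h <- Gt | h != ft]).
Local Notation I := (in_ideal (in_Qadj alpha) (map subst gs)).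

Lemma mem_subst_Gt g : g \in G -> exists2 h, h \in Gt & h != ft /\ g = subst h.
Proof. by case/mapP => h; rewrite mem_filter => /andP [h_ft Gh] ->; exists h. Qed.

Lemma subst_Gt_in_ideal g : g \in G -> [/\ g != 0, coefs_in (in_Qadj alpha) g & I g].
Proof.
move=> /mem_subst_Gt [h Gh [h_ft ->]]; have [mh [_ _ _ subst1]] := subst_Gt_LM Gh h_ft.
split; [|exact: coefs_in_subst | exact/subst_in_ideal/Gt_in_J].
by apply: contra_neq (oner_neq0 algC) => h0; rewrite -subst1 h0 mcoeff0.
Qed.

Lemma subst_Gt_cover p : I p -> p != 0 ->
  exists g mg mp, [/\ g \in G, is_LM lt1 g mg, is_LM lt1 p mp & (mg <= mp)%MM].
Proof.
move=> Ip p0; have [P JP Pp] := lift_in_ideal Ip.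
have [P' [JP' P'p P'_t]] := J_mod_ft JP; rewrite -{}Pp -{}P'p in p0 *.
have P'0 : P' != 0 by apply: contra_neq p0 => ->; rewrite rmorph0.
have [g [mg [mP [Gg g_mg P'_mP le_mg]]]] := Gt_red.1.2 _ JP' P'0.
have g_ft : g != ft.
  apply: contraTneq le_mg => g_ft; rewrite g_ft in g_mg.
  rewrite (is_LM_uniq lt_irr lt_trans g_mg is_LM_ft) lem_mXmt mt_mk negb_and orbC -ltnNge.
  by rewrite P'_t //; case: P'_mP.
have [mg' [g_mg' _ subst_g _]] := subst_Gt_LM Gg g_ft.
rewrite -(is_LM_uniq lt_irr lt_trans g_mg g_mg') in subst_g.
exists (subst g), (mX mg), (mX mP); split=> //.
- by rewrite map_f // mem_filter g_ft Gg.
- exact: is_LM_subst_reduced.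
by move: le_mg; rewrite lem_mXmt => /andP [].
Qed.

Lemma subst_Gt_interreduced g : g \in G ->
  (exists mg, is_LM lt1 g mg /\ g@_mg = 1) /\
  (forall g' mg', g' \in G -> g' != g -> is_LM lt1 g' mg' ->
     forall m, m \in msupp g -> ~~ (mg' <= m)%MM).
Proof.
move=> /mem_subst_Gt [h Gh [h_ft ->]]; have [mh [_ _ subst_mh subst1]] := subst_Gt_LM Gh h_ft.
split=> [|_ mg' /mem_subst_Gt [h' Gh' [h'_ft ->]] neq subst_mg' a subst_a]; first by exists (mX mh).
have [mh' [h'_mh' mh'_t0 subst_mh' _]] := subst_Gt_LM Gh' h'_ft.
rewrite (is_LM_uniq (lt1_irr lt1_order) (lt1_trans lt1_order) subst_mg' subst_mh').
have [m h_m <-] := msupp_subst subst_a.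
apply/negP => le_a; have le_m : (mh' <= m)%MM by rewrite lem_mXmt le_a mh'_t0.
have h'_h := reduced_groebner_LM_dvd Gt_red Gh Gh' h'_mh' h_m le_m.
by rewrite h'_h eqxx in neq.
Qed.

Lemma subst_Gt_reduced_groebner : is_reduced_groebner lt1 (in_Qadj alpha) I G.
Proof.
split; last exact: subst_Gt_interreduced.
by split; [exact: subst_Gt_in_ideal | exact: subst_Gt_cover].
Qed.

End SubstitutedBasis.

Theorem theorem5p1
  (alpha : algC) (f : {poly rat})
  (f_monic : f \is monic)
  (f_root : root (map_poly ratr f) alpha)
  (f_min : forall q : {poly rat}, root (map_poly ratr q) alpha -> f %| q)
  (n : nat) (lt1 : rel 'X_{1..n}) (lt1_order : monomial_order lt1)
  (gs : seq {mpoly rat[n.+1]})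
  (Gt : seq {mpoly rat[n.+1]})
  (Gt_red : is_reduced_groebner (prod_order lt1) (fun _ => True)
              (in_ideal (fun _ => True) (rcons gs (poly_in_t n f))) Gt) :
  is_reduced_groebner lt1 (in_Qadj alpha)
    (in_ideal (in_Qadj alpha) (map (subst_t alpha) gs))
    (map (subst_t alpha) [seq g <- Gt | g != poly_in_t n f]).
Proof. exact (subst_Gt_reduced_groebner f_monic f_root f_min lt1_order Gt_red). Qed.
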